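(* Let $k,l\in\hat I$, $u,v\in\mathbb C^\times$, and consider $V^{(k)}(u)\otimes V^{(l)}(v)$ with basis $[u]^{(k)}_i\otimes[v]^{(l)}_j$ ($i,j\in\mathbb Z$) and the action of $\mathcal E_n$ given by the coproduct. Then: 1. If $uq_1^{nm+k-l}=v$ for some $m\in\mathbb Z$, the action of $\mathcal E_n$ is not well-defined; in all other cases it is well-defined. 2. If $uq_2q_1^{nm+k-l}=v$ for some $m\in\mathbb Z$, the span of the vectors $[u]^{(k)}_i\otimes[v]^{(l)}_j$ with $i\ge j+nm+k-l$ is a submodule. This submodule and the corresponding quotient module are tame, irreducible $\mathcal E_n$-modules of level $1$. 3. If $uq_2^{-1}q_1^{nm+k-l}=v$ for some $m\in\mathbb Z$, the span of the vectors $[u]^{(k)}_i\otimes[v]^{(l)}_j$ with $i\ge j+nm+k-l+1$ is a submodule. This submodule and the quotient module are tame, irreducible $\mathcal E_n$-modules of level $1$. 4. In all other cases $V^{(k)}(u)\otimes V^{(l)}(v)$ is a tame, irreducible $\mathcal E_n$-module of level $1$.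
   Context: Fix an integer $n\ge3$ and let $\hat I=\{0,1,\dots,n-1\}$. Indices in $\hat I$ are taken cyclically modulo $n$, and $a\equiv b$ means $n\mid a-b$. Let $a_{ii}=2$, $a_{i,i\pm1}=-1$ and $a_{ij}=0$ otherwise. Let $m_{i-1,i}=-1$, $m_{i,i-1}=1$ and $m_{ij}=0$ otherwise. Let $q,d\in\mathbb C^\times$ and $q_1=d/q$, $q_2=q^2$, $q_3=1/(dq)$. Assume genericity: $q_1^aq_2^bq_3^c=1$ ($a,b,c\in\mathbb Z$) only if $a=b=c$. Let $\delta(z)=\sum_{m\in\mathbb Z}z^m$ and $\psi(z)=\frac{q-q^{-1}z}{1-z}$. The algebra $\mathcal E_n$ has generators $E_{i,m},F_{i,m},H_{i,l}$ ($l\ne0$) and $K_i^{\pm1}$, with series $E_i(z)=\sum E_{i,m}z^{-m}$, $F_i(z)=\sum F_{i,m}z^{-m}$ and $K_i^\pm(z)=K_i^{\pm1}\exp(\pm(q-q^{-1})\sum_{m\ge1}H_{i,\pm m}z^{\mp m})$. The relations are: - $K_iK_i^{-1}=1$, and the $K$'s commute; - $(q^{a_{ij}}w-d^{m_{ij}}z)K_i^\pm(z)E_j(w)=(w-d^{m_{ij}}q^{a_{ij}}z)E_j(w)K_i^\pm(z)$; - $(w-d^{m_{ij}}q^{a_{ij}}z)K_i^\pm(z)F_j(w)=(q^{a_{ij}}w-d^{m_{ij}}z)F_j(w)K_i^\pm(z)$; - $[E_i(z),F_j(w)]=\frac{\delta_{ij}}{q-q^{-1}}(\delta(w/z)K_i^+(w)-\delta(z/w)K_i^-(z))$;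 - $(d^{m_{ij}}z-q^{a_{ij}}w)E_i(z)E_j(w)=(d^{m_{ij}}q^{a_{ij}}z-w)E_j(w)E_i(z)$; - $(d^{m_{ij}}z-q^{-a_{ij}}w)F_i(z)F_j(w)=(d^{m_{ij}}q^{-a_{ij}}z-w)F_j(w)F_i(z)$; - the cubic Serre relations $E_i(z_1)E_i(z_2)E_{i\pm1}(w)-(q+q^{-1})E_i(z_1)E_{i\pm1}(w)E_i(z_2)+E_{i\pm1}(w)E_i(z_1)E_i(z_2)+(z_1\leftrightarrow z_2)=0$, and likewise for $F$; - $[E_i(z),E_j(w)]=[F_i(z),F_j(w)]=0$ for $i\not\equiv j,j\pm1$. Let $\kappa=\prod K_i$. A module has level $K$ if $\kappa^{-1}$ acts by $K$. It is tame if the $K_i^\pm(z)$ are simultaneously diagonalizable with one-dimensional joint eigenspaces. The vector representation $V^{(k)}(u)$ ($k\in\hat I$, $u\in\mathbb C^\times$) has basis $[u]^{(k)}_j$, $j\in\mathbb Z$, with action: - $E_i(z)[u]^{(k)}_j=\delta(q_1^{j+1}u/z)[u]^{(k)}_{j+1}$ if $i+j+1\equiv k$, else $0$; - $F_i(z)[u]^{(k)}_{j+1}=\delta(q_1^{j+1}u/z)[u]^{(k)}_j$ if $i+j+1\equiv k$, else $0$; - $K_i^\pm(z)[u]^{(k)}_j$ is $\psi(q_1^ju/z)[u]^{(k)}_j$ if $j+i\equiv k$, is $\psi(q_1^jq_3^{-1}u/z)^{-1}[u]^{(k)}_j$ if $j+i+1\equiv k$, and is $[u]^{(k)}_j$ otherwise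 (rational functions expanded in $z^{\mp1}$). Tensor products carry the action defined by the coproduct: $\Delta K_i^\pm(z)=K_i^\pm(z)\otimes K_i^\pm(z)$, $\Delta E_i(z)=E_i(z)\otimes1+K_i^-(z)\otimes E_i(z)$, $\Delta F_i(z)=F_i(z)\otimes K_i^+(z)+1\otimes F_i(z)$. The resulting matrix coefficients are products $g(z)\delta(c/z)$ of a rational function $g$ (coming from a $K$-eigenvalue) and a delta function. They are interpreted as $g(c)\delta(c/z)$, and the action is called well-defined when $g$ never has a pole at the relevant point $c$. *)

(* C is modelled as R[i] for an arbitrary realType R (all are ≅ ℝ). *)
From HB Require Import structures.
From mathcomp Require Import all_boot all_order all_algebra complex reals.
Set Implicit Arguments. Unset Strict Implicit. Unset Printing Implicit Defensive.
Import Order.TTheory GRing.Theory Num.Theory.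
Local Open Scope ring_scope.

Inductive gen (n : nat) : Type :=
| GE of 'I_n & int
| GF of 'I_n & int
| GH of 'I_n & int
| GK of 'I_n
| GKinv of 'I_n.

Definition valid_gen n (g : gen n) : bool :=
  if g is GH _ l then l != 0 else true.
(* generators whose generating series are the K_s^{\pm}(z) *)
Definition cartan_gen n (g : gen n) : bool :=
  match g with GH _ l => l != 0 | GK _ | GKinv _ => true | _ => false end.

Section Toroidal.
Variable R : realType.
Local Notation C := R[i].
Variables (n : nat) (q d : C).

Definition q1 : C := d / q.
Definition q2 : C := q ^+ 2.
Definition q3 : C := (d * q)^-1.

Definition generic : Prop :=
  forall a b c : int, q1 ^ a * q2 ^ b * q3 ^ c = 1 -> a = b /\ b = c.

Definition congr (a b : int) : bool := (n%:Z %| (a - b))%Z.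

(* psi(x) = (q - q^{-1} x)/(1 - x) : numerator and denominator *)
Definition psi_num (x : C) : C := q - q^-1 * x.
Definition psi_den (x : C) : C := 1 - x.

(* Eigenvalue of K_s^{\pm}(z) on [w]^{(kk)}_j in V^{(kk)}(w), as the rational
   function Knum(z)/Kden(z) in z:
   psi(q1^j w / z)              if j + s ≡ kk,
   psi(q1^j q3^{-1} w / z)^{-1} if j + s + 1 ≡ kk,
   1                            otherwise. *)
Section Single.
Variables (kk : 'I_n) (w : C) (s : 'I_n) (j : int).
Definition Knum (z : C) : C :=
  if congr (j + s%:Z) kk then psi_num (q1 ^ j * w / z)
  else if congr (j + s%:Z + 1) kk then psi_den (q1 ^ j * q3^-1 * w / z)
  else 1.
Definition Kden (z : C) : C :=
  if congr (j + s%:Z) kk then psi_den (q1 ^ j * w / z)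
  else if congr (j + s%:Z + 1) kk then psi_num (q1 ^ j * q3^-1 * w / z)
  else 1.
(* value g(c) of the rational function, and "g has a pole at c"
   (numerator and denominator are of degree <= 1, so this is the exact pole test) *)
Definition Kval (c : C) : C := Knum c / Kden c.
Definition Kpole (c : C) : bool := (Kden c == 0) && (Knum c != 0).

(* eigenvalue of K_s (constant term of the expansion of K_s^+(z)) *)
Definition Keig : C :=
  if congr (j + s%:Z) kk then q
  else if congr (j + s%:Z + 1) kk then q^-1
  else 1.
(* eigenvalue of H_{s,m}, m <> 0, read off from
   log psi(a/z) = log q + sum_{m>=1} (1 - q^{-2m}) a^m z^{-m} / m   (|z| large)
   log psi(a/z) = -log q + sum_{p>=1} (1 - q^{2p}) a^{-p} z^p / p   (|z| small) *)
Definition hcoef (m : int) (a : C) : C :=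
  (1 - q ^ (- (2 * m))) * a ^ m / (m%:~R * (q - q^-1)).
Definition Heig (m : int) : C :=
  if congr (j + s%:Z) kk then hcoef m (q1 ^ j * w)
  else if congr (j + s%:Z + 1) kk then - hcoef m (q1 ^ j * q3^-1 * w)
  else 0.
End Single.

Section Tensor.
Variables (k l : 'I_n) (u v : C).

(* vectors: functions giving the coefficient of [u]_i ⊗ [v]_j *)
Definition vec := int * int -> C.

(* Matrix coefficients of the coproduct action on basis vectors:
   Delta E_s(z) = E_s(z) ⊗ 1 + K_s^-(z) ⊗ E_s(z);  E_{s,m} = coeff of z^{-m};
   delta(c/z) = sum_m c^m z^{-m}, and g(z) delta(c/z) read as g(c) delta(c/z). *)
(* coefficient of [u]_{i+1}⊗[v]_j in E_{s,m}([u]_i⊗[v]_j) *)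
Definition Ecoef1 (s : 'I_n) (m i j : int) : C :=
  if congr (s%:Z + i + 1) k then (q1 ^ (i + 1) * u) ^ m else 0.
(* coefficient of [u]_i⊗[v]_{j+1} in E_{s,m}([u]_i⊗[v]_j) *)
Definition Ecoef2 (s : 'I_n) (m i j : int) : C :=
  if congr (s%:Z + j + 1) l
  then Kval k u s i (q1 ^ (j + 1) * v) * (q1 ^ (j + 1) * v) ^ m else 0.
(* Delta F_s(z) = F_s(z) ⊗ K_s^+(z) + 1 ⊗ F_s(z) *)
(* coefficient of [u]_{i-1}⊗[v]_j in F_{s,m}([u]_i⊗[v]_j) *)
Definition Fcoef1 (s : 'I_n) (m i j : int) : C :=
  if congr (s%:Z + i) k
  then Kval l v s j (q1 ^ i * u) * (q1 ^ i * u) ^ m else 0.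
(* coefficient of [u]_i⊗[v]_{j-1} in F_{s,m}([u]_i⊗[v]_j) *)
Definition Fcoef2 (s : 'I_n) (m i j : int) : C :=
  if congr (s%:Z + j) l then (q1 ^ j * v) ^ m else 0.
(* Delta K^\pm(z) = K^\pm(z) ⊗ K^\pm(z): K multiplies, H adds *)
Definition Kcoef (s : 'I_n) (i j : int) : C := Keig k s i * Keig l s j.
Definition Hcoef (s : 'I_n) (m i j : int) : C := Heig k u s i m + Heig l v s j m.

Definition act (g : gen n) (x : vec) : vec :=
  fun p => let i := p.1 in let j := p.2 in
  match g with
  | GE s m => Ecoef1 s m (i - 1) j * x (i - 1, j) + Ecoef2 s m i (j - 1) * x (i, j - 1)
  | GF s m => Fcoef1 s m (i + 1) j * x (i + 1, j) + Fcoef2 s m i (j + 1) * x (i, j + 1)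
  | GH s m => Hcoef s m i j * x p
  | GK s => Kcoef s i j * x p
  | GKinv s => (Kcoef s i j)^-1 * x p
  end.

(* well-definedness: no coefficient g(z) delta(c/z) has g with a pole at c *)
Definition well_defined : Prop :=
  forall (s : 'I_n) (i j : int),
    (congr (s%:Z + j + 1) l -> ~~ Kpole k u s i (q1 ^ (j + 1) * v)) /\
    (congr (s%:Z + i) k -> ~~ Kpole l v s j (q1 ^ i * u)).

(* A subquotient given by a set D of basis indices: the span of the basis
   vectors [u]_i⊗[v]_j with D (i,j); its action is the compression of act.
   For D the full set this is the module, for D a submodule region this is
   the submodule, and for D the complement of a submodule region this is
   (isomorphic to) the quotient module. *)
Definition inM (D : int * int -> bool) (x : vec) : Prop :=
  (exists sq : seq (int * int), forall p, p \notin sq -> x p = 0) /\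
  (forall p, ~~ D p -> x p = 0).

Definition actD (D : int * int -> bool) (g : gen n) (x : vec) : vec :=
  fun p => if D p then act g x p else 0.

Definition zerov : vec := fun _ => 0.

Definition is_submodule (D : int * int -> bool) : Prop :=
  forall g, valid_gen g -> forall x, inM D x -> inM D (act g x).

Definition subspace (S : vec -> Prop) : Prop :=
  S zerov /\ (forall x y, S x -> S y -> S (fun p => x p + y p)) /\
  (forall (c : C) x, S x -> S (fun p => c * x p)).

Definition irreducible (D : int * int -> bool) : Prop :=
  (exists x, inM D x /\ x <> zerov) /\
  forall S : vec -> Prop, subspace S -> (forall x, S x -> inM D x) ->
    (forall g, valid_gen g -> forall x, S x -> S (actD D g x)) ->
    (exists x, S x /\ x <> zerov) -> forall x, inM D x -> S x.

Definition joint_eig (D : int * int -> bool) (lam : gen n -> C) (x : vec) : Prop :=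
  inM D x /\ x <> zerov /\
  forall g, cartan_gen g -> actD D g x = (fun p => lam g * x p).

Definition tame (D : int * int -> bool) : Prop :=
  (forall x, inM D x -> exists (r : nat) (xs : nat -> vec) (lams : nat -> gen n -> C),
      (forall t, (t < r)%N -> joint_eig D (lams t) (xs t)) /\
      x = (fun p => \sum_(t < r) xs t p)) /\
  (forall lam x y, joint_eig D lam x -> joint_eig D lam y ->
      exists c : C, y = (fun p => c * x p)).

Definition kappa_inv (D : int * int -> bool) (x : vec) : vec :=
  foldr (fun s acc => actD D (GKinv s) acc) x (enum 'I_n).

Definition level1 (D : int * int -> bool) : Prop :=
  forall x, inM D x -> kappa_inv D x = x.

Definition tame_irr_level1 (D : int * int -> bool) : Prop :=
  tame D /\ irreducible D /\ level1 D.

Definition region (c : int) : int * int -> bool := fun p => p.2 + c <= p.1.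
Definition coregion (c : int) : int * int -> bool := fun p => ~~ region c p.
Definition fullregion : int * int -> bool := fun _ => true.

End Tensor.
End Toroidal.

(* The Cartan generators act diagonally on the basis [u]_i (x) [v]_j.  Summed
   over s, the H_{s,m}-eigenvalues are the power sums X^m + Y^m of X = q1^i u and
   Y = q1^j v; together with the single K_s- and H_{s,1}-eigenvalues they separate
   the basis vectors unless v = u q1^a with a = k - l mod n.  Away from that case
   every subspace stable under the Cartan generators is spanned by basis vectors,
   so a submodule containing one basis vector contains every basis vector reachable
   by E- and F-moves with nonzero coefficient.  The only coefficients that can
   vanish or blow up are the mixed ones: E_s acting on the second factor, weighted
   by the K^-(z)-eigenvalue of the first factor, and F_s acting on the first factor,
   weighted by the K^+(z)-eigenvalue of the second.  By genericity their poles occur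
   exactly when v = u q1^a and their zeros exactly when v = u q2^(+-1) q1^a, with
   a = k - l mod n.  The zeros lie on one diagonal i - j = const, which cuts Z^2 into
   the submodule and the quotient, and within each piece the nonvanishing moves
   connect all basis vectors.  The level is 1 because the K_s-eigenvalues multiply
   to 1 over a full period of residues s. *)

From Pilot Require Import Defs.
From HB Require Import structures.
From mathcomp Require Import all_boot all_order all_algebra complex reals.
From mathcomp Require Import ring zify.
From Stdlib Require Import FunctionalExtensionality Classical.
Import Order.TTheory GRing.Theory Num.Theory.
Local Open Scope ring_scope.
Set Implicit Arguments. Unset Strict Implicit. Unset Printing Implicit Defensive.

Section Generic.
Variable R : realType.
Variables q d : R[i].
Hypotheses (Hq : q != 0) (Hd : d != 0).
Local Notation q1 := (Defs.q1 q d).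
Local Notation q2 := (Defs.q2 q).
Local Notation q3 := (Defs.q3 q d).

Lemma q1_neq0 : q1 != 0.
Proof. by rewrite /Defs.q1 mulf_neq0 ?invr_eq0. Qed.

Lemma q2_neq0 : q2 != 0.
Proof. by rewrite /Defs.q2 expf_neq0. Qed.

Lemma q3V : q3^-1 = q1 * q2.
Proof. by rewrite /Defs.q1 /Defs.q2 /Defs.q3 invrK; field. Qed.

Lemma q2_expz (m : int) : q2 ^ m = q ^ (2 * m).
Proof. by rewrite /Defs.q2 -exprz_exp. Qed.

Lemma psi_den_div_eq0 (X Y : R[i]) : Y != 0 -> (psi_den (X / Y) == 0) = (X == Y).
Proof.
move=> Y0; rewrite /psi_den subr_eq0 eq_sym.
by apply/eqP/eqP => [e|->]; [rewrite -(divfK Y0 X) e mul1r | rewrite divff].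
Qed.

Lemma psi_num_div_eq0 (X Y : R[i]) : Y != 0 -> (psi_num q (X / Y) == 0) = (X == q2 * Y).
Proof.
move=> Y0; rewrite /psi_num subr_eq0 eq_sym /Defs.q2 expr2.
apply/eqP/eqP => [e|->]; last by field; rewrite Y0 Hq.
by rewrite -(divfK Y0 X) -[X / Y](mulVKf Hq) e.
Qed.

Lemma monomial_eqE (a b a' b' : int) (w w' : R[i]) :
  (q1 ^ a * q2 ^ b * w == q1 ^ a' * q2 ^ b' * w') = (w' == w * q1 ^ (a - a') * q2 ^ (b - b')).
Proof.
have h1 : q1 ^ a' != 0 by rewrite expfz_neq0 ?q1_neq0.
have h2 : q2 ^ b' != 0 by rewrite expfz_neq0 ?q2_neq0.
rewrite !expfzDr ?q1_neq0 ?q2_neq0 // -!invr_expz.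
apply/eqP/eqP => [e|->]; last by field; rewrite h1 h2.
by apply: (mulfI (mulf_neq0 h1 h2)); rewrite -e; field; rewrite h1 h2.
Qed.

Lemma monomial_eqV (a b : int) (w w' : R[i]) :
  w' = w * q1 ^ a * q2 ^ b -> w = w' * q1 ^ (- a) * q2 ^ (- b).
Proof.
have h1 : q1 ^ a != 0 by rewrite expfz_neq0 ?q1_neq0.
have h2 : q2 ^ b != 0 by rewrite expfz_neq0 ?q2_neq0.
by move=> ->; rewrite -!invr_expz; field; rewrite h1 h2.
Qed.

Hypothesis Hgen : generic q d.

Lemma q1q2_expz_inj (a b a' b' : int) :
  q1 ^ a * q2 ^ b = q1 ^ a' * q2 ^ b' -> a = a' /\ b = b'.
Proof.
move=> e.
have e0 : q1 ^ (a - a') * q2 ^ (b - b') * q3 ^ 0 = 1.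
  have h1 : q1 ^ a' != 0 by rewrite expfz_neq0 ?q1_neq0.
  have h2 : q2 ^ b' != 0 by rewrite expfz_neq0 ?q2_neq0.
  rewrite expr0z mulr1 !expfzDr ?q1_neq0 ?q2_neq0 // -!invr_expz mulrACA e.
  by field; rewrite h1 h2.
have [ha hb] := Hgen e0.
by split; apply/eqP; rewrite -subr_eq0; apply/eqP; rewrite ?ha.
Qed.

Lemma q1_expz_inj (a b : int) (w : R[i]) : w != 0 -> q1 ^ a * w = q1 ^ b * w -> a = b.
Proof.
move=> w0 /(mulIf w0) e.
by have [] := @q1q2_expz_inj a 0 b 0; rewrite ?expr0z ?mulr1.
Qed.

Lemma q_expz_inj (a b : int) : q ^ a = q ^ b -> a = b.
Proof.
move=> e; have e2 : q1 ^ 0 * q2 ^ a = q1 ^ 0 * q2 ^ b.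
  by rewrite !q2_expz ![2 * _]mulrC -!exprz_exp e.
by have [] := q1q2_expz_inj e2.
Qed.

Lemma q2_neq1 : q2 != 1.
Proof.
apply/eqP => e; have e2 : q1 ^ 0 * q2 ^ 1 = q1 ^ 0 * q2 ^ 0 by rewrite expr1z e !expr0z.
by have [_] := q1q2_expz_inj e2.
Qed.

Lemma q_subV_neq0 : q - q^-1 != 0.
Proof.
apply: contra q2_neq1; rewrite subr_eq0 /Defs.q2 expr2 => /eqP e.
by rewrite {1}e mulVf.
Qed.

Lemma q3V_expz_neq1 (m : int) : m != 0 -> q3^-1 ^ m != 1.
Proof.
move=> m0; apply/eqP; rewrite q3V expfzMl => e.
have e2 : q1 ^ m * q2 ^ m = q1 ^ 0 * q2 ^ 0 by rewrite e !expr0z mulr1.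
by have [/eqP] := q1q2_expz_inj e2; rewrite (negbTE m0).
Qed.

Lemma q3V_neqN1 : q3^-1 != -1.
Proof.
apply/eqP => e.
have e2 : q1 ^ 2 * q2 ^ 2 = q1 ^ 0 * q2 ^ 0.
  by rewrite -expfzMl -q3V e -exprnP sqrrN expr1n !expr0z mulr1.
by have [] := q1q2_expz_inj e2.
Qed.

End Generic.

Section Residues.
Variable n : nat.
Hypothesis Hn : (1 < n)%N.
Local Notation congr := (Defs.congr n).

Lemma congr_addE (a b a' b' x y : int) :
  congr a b -> congr a' b' -> x - y = a - b + (a' - b') -> congr x y.
Proof. by rewrite /Defs.congr => h h' ->; exact: rpredD. Qed.

Lemma congr_subE (a b a' b' x y : int) :
  congr a b -> congr a' b' -> x - y = a - b - (a' - b') -> congr x y.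
Proof. by rewrite /Defs.congr => h h' ->; exact: rpredB. Qed.

Lemma congr_small (x : int) : congr x 0 -> `|x| < n%:Z -> x = 0.
Proof.
rewrite /Defs.congr subr0 => /dvdzP [t ->].
have n0 : 0 < n%:Z by rewrite ltz_nat; lia.
rewrite normrM (gtr0_norm n0) => h; suff -> : t = 0 by rewrite mul0r.
by apply/normr0_eq0; have : 0 <= `|t| by []; nia.
Qed.

Lemma exists_residue (x : int) (kk : 'I_n) : exists s : 'I_n, congr (s%:Z + x) kk.
Proof.
have n0 : n%:Z != 0 by rewrite eqz_nat; lia.
have hb : (absz ((kk%:Z - x) %% n%:Z)%Z < n)%N.
  by rewrite -ltz_nat gez0_abs ?modz_ge0 // ltz_pmod // ltz_nat; lia.
exists (Ordinal hb); rewrite /= gez0_abs ?modz_ge0 // /Defs.congr.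
have := divz_eq (kk%:Z - x) n%:Z.
set t := (_ %/ _)%Z; set r := (_ %% _)%Z => e.
by rewrite (_ : r + x - kk%:Z = - (t * n%:Z)) ?rpredN ?dvdz_mull //; lia.
Qed.

Lemma residue_inj (s s' : 'I_n) : congr s s' -> s = s'.
Proof.
move=> h; apply/val_inj/eqP => /=; rewrite -eqz_nat -subr_eq0; apply/eqP.
apply: congr_small; first by move: h; rewrite /Defs.congr subr0.
have := ltn_ord s; have := ltn_ord s'; rewrite -!ltz_nat => h1 h2.
rewrite ltr_norml; apply/andP; split; lia.
Qed.

Lemma congr_succ (a b : int) : congr a b -> ~~ congr (a + 1) b.
Proof.
move=> h; apply/negP => h1.
have h10 : congr 1 0 by apply: (congr_subE h1 h); ring.
have := congr_small h10; rewrite normr1 => /(_ _); lia.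
Qed.

Lemma big_two_points (T : Type) (idx : T) (op : Monoid.com_law idx)
    (P1 P2 : pred 'I_n) (A B : T) (s1 s2 : 'I_n) :
  P1 s1 -> P2 s2 -> (forall s, P1 s -> s = s1) -> (forall s, P2 s -> s = s2) ->
  s1 != s2 -> \big[op/idx]_s (if P1 s then A else if P2 s then B else idx) = op A B.
Proof.
move=> h1 h2 u1 u2 ne.
have P1F s : s != s1 -> P1 s = false by move=> ns; apply: contraNF ns => /u1 ->.
have P2F s : s != s2 -> P2 s = false by move=> ns; apply: contraNF ns => /u2 ->.
rewrite (bigD1 s1) //= h1 (bigD1 s2) 1?eq_sym //= P1F 1?eq_sym // h2.
by rewrite big1 ?Monoid.mulm1 // => s /andP [ns1 ns2]; rewrite P1F ?P2F.
Qed.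

Lemma big_residue_branch (T : Type) (idx : T) (op : Monoid.com_law idx)
    (x : int) (kk : 'I_n) (A B : T) :
  \big[op/idx]_(s : 'I_n)
    (if congr (x + s%:Z) kk then A else if congr (x + s%:Z + 1) kk then B else idx)
  = op A B.
Proof.
have [s1 c1] := exists_residue x kk; rewrite addrC in c1.
have [s2 c2] := exists_residue (x + 1) kk; rewrite addrC in c2.
have unique (y : int) (s s' : 'I_n) : congr (y + s%:Z) kk -> congr (y + s'%:Z) kk -> s = s'.
  by move=> e e'; apply: residue_inj; apply: (congr_subE e e'); ring.
apply: (big_two_points op A B c1 (s2 := s2)).
- by rewrite addrAC.
- by move=> s /unique; apply.
- by move=> s; rewrite addrAC => /unique; apply.
- apply/eqP => e; move: c2; rewrite -e addrAC; apply/negP; exact: congr_succ.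
Qed.

End Residues.

Definition adjacent (p p' : int * int) : Prop :=
  [\/ p' = (p.1 + 1, p.2), p' = (p.1 - 1, p.2), p' = (p.1, p.2 + 1) | p' = (p.1, p.2 - 1)].

Definition l1dist (p p' : int * int) : int := `|p.1 - p'.1| + `|p.2 - p'.2|.

Definition step_connected (D : int * int -> bool) : Prop :=
  forall p p', D p -> D p' -> p != p' ->
  exists p'', [/\ D p'', adjacent p p'' & l1dist p'' p' < l1dist p p'].

Lemma step_connected_ind (D : int * int -> bool) (P : int * int -> Prop) :
  step_connected D -> (forall p p', D p -> D p' -> adjacent p p' -> P p -> P p') ->
  forall p0 p, D p0 -> D p -> P p0 -> P p.
Proof.
move=> hc hstep p0 p D0 Dp P0.
have dist_ge0 p1 : 0 <= l1dist p1 p by rewrite addr_ge0.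
suff H : forall (N : nat) p1, D p1 -> P p1 -> l1dist p1 p <= N%:Z -> P p.
  by apply: (H (absz (l1dist p0 p)) p0); rewrite // abszE ler_norm.
elim=> [|N IH] p1 D1 P1 hd; case: (eqVneq p1 p) => [<- //|ne];
  have [p'' [D'' adj lt]] := hc _ _ D1 Dp ne; have := dist_ge0 p''.
- lia.
- by move=> ?; apply: (IH p'' D'' (hstep _ _ D1 D'' adj P1)); lia.
Qed.

Lemma region_step_connected (c : int) : step_connected (region c).
Proof.
move=> [i j] [i' j']; rewrite /region /l1dist /= => D1 D2.
rewrite xpair_eqE negb_and => ne.
case: (ltrP j' j) => h1; first by exists (i, j - 1); split => /=; [lia | apply: Or44 | lia].
case: (ltrP i i') => h2; first by exists (i + 1, j); split => /=; [lia | apply: Or41 | lia].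
case: (ltrP i' i) => h3; first by exists (i - 1, j); split => /=; [lia | apply: Or42 | lia].
by exists (i, j + 1); split => /=; [lia | apply: Or43 | lia].
Qed.

Lemma coregion_step_connected (c : int) : step_connected (coregion c).
Proof.
move=> [i j] [i' j']; rewrite /coregion /region /l1dist /= => D1 D2.
rewrite xpair_eqE negb_and => ne.
case: (ltrP i' i) => h1; first by exists (i - 1, j); split => /=; [lia | apply: Or42 | lia].
case: (ltrP j j') => h2; first by exists (i, j + 1); split => /=; [lia | apply: Or43 | lia].
case: (ltrP j' j) => h3; first by exists (i, j - 1); split => /=; [lia | apply: Or44 | lia].
by exists (i + 1, j); split => /=; [lia | apply: Or41 | lia].
Qed.

Lemma fullregion_step_connected : step_connected fullregion.
Proof.
move=> [i j] [i' j'] _ _; rewrite xpair_eqE negb_and /l1dist /= => ne.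
case: (ltrP i i') => h1; first by exists (i + 1, j); split => /=; [by [] | apply: Or41 | lia].
case: (ltrP i' i) => h2; first by exists (i - 1, j); split => /=; [by [] | apply: Or42 | lia].
case: (ltrP j j') => h3; first by exists (i, j + 1); split => /=; [by [] | apply: Or43 | lia].
by exists (i, j - 1); split => /=; [by [] | apply: Or44 | lia].
Qed.


Section SingleFactor.
Variable R : realType.
Local Notation C := R[i].
Variables (n : nat) (q d : C).
Hypotheses (Hn : (1 < n)%N) (Hq : q != 0) (Hd : d != 0).
Local Notation q1 := (Defs.q1 q d).
Local Notation q2 := (Defs.q2 q).
Local Notation congr := (Defs.congr n).
Variables (kk : 'I_n) (w w' : C) (s : 'I_n) (x c : int).
Hypothesis Hw' : w' != 0.
Local Notation Y := (q1 ^ c * w').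

Let Y_neq0 : Y != 0.
Proof. by rewrite mulf_neq0 ?expfz_neq0 ?q1_neq0. Qed.

Let q1q3V_mulE (y : int) : q1 ^ y * (Defs.q3 q d)^-1 * w = q1 ^ (y + 1) * q2 ^ 1 * w.
Proof. by rewrite q3V // expfzDr ?q1_neq0 // !expr1z !mulrA. Qed.

Let psi_den_eq0E (a b : int) :
  (psi_den (q1 ^ a * q2 ^ b * w / Y) == 0) = (w' == w * q1 ^ (a - c) * q2 ^ b).
Proof.
rewrite (psi_den_div_eq0 _ Y_neq0) (_ : Y = q1 ^ c * q2 ^ 0 * w'); last by rewrite expr0z mulr1.
by rewrite monomial_eqE // subr0.
Qed.

Let psi_num_eq0E (a b : int) :
  (psi_num q (q1 ^ a * q2 ^ b * w / Y) == 0) = (w' == w * q1 ^ (a - c) * q2 ^ (b - 1)).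
Proof.
rewrite (psi_num_div_eq0 Hq _ Y_neq0).
have -> : q2 * Y = q1 ^ c * q2 ^ 1 * w' by rewrite expr1z mulrCA mulrA.
by rewrite monomial_eqE.
Qed.

Let plainE (y : int) : q1 ^ y * w = q1 ^ y * q2 ^ 0 * w.
Proof. by rewrite expr0z mulr1. Qed.

Lemma Kden_eq0 : Kden q d kk w s x Y = 0 ->
  congr (x + s%:Z) kk /\ w' = w * q1 ^ (x - c) * q2 ^ 0 \/
  congr (x + s%:Z + 1) kk /\ w' = w * q1 ^ (x + 1 - c) * q2 ^ 0.
Proof.
move/eqP; rewrite /Kden; case: ifP => c1.
  by rewrite plainE psi_den_eq0E => /eqP; left.
case: ifP => c2; last by rewrite oner_eq0.
by rewrite q1q3V_mulE psi_num_eq0E subrr => /eqP; right.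
Qed.

Lemma Knum_eq0 : Knum q d kk w s x Y = 0 ->
  congr (x + s%:Z) kk /\ w' = w * q1 ^ (x - c) * q2 ^ (-1) \/
  congr (x + s%:Z + 1) kk /\ w' = w * q1 ^ (x + 1 - c) * q2 ^ 1.
Proof.
move/eqP; rewrite /Knum; case: ifP => c1.
  by rewrite plainE psi_num_eq0E sub0r => /eqP; left.
case: ifP => c2; last by rewrite oner_eq0.
by rewrite q1q3V_mulE psi_den_eq0E => /eqP; right.
Qed.

Lemma Knum_eq0_first : congr (x + s%:Z) kk ->
  w' = w * q1 ^ (x - c) * q2 ^ (-1) -> Knum q d kk w s x Y = 0.
Proof. by move=> c1 e; apply/eqP; rewrite /Knum c1 plainE psi_num_eq0E sub0r e. Qed.

Lemma Knum_eq0_second : congr (x + s%:Z + 1) kk ->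
  w' = w * q1 ^ (x + 1 - c) * q2 ^ 1 -> Knum q d kk w s x Y = 0.
Proof.
move=> c2 e; have c1 : ~~ congr (x + s%:Z) kk.
  by apply: contraL c2 => c1; apply: congr_succ.
by apply/eqP; rewrite /Knum (negbTE c1) c2 q1q3V_mulE psi_den_eq0E e.
Qed.

Hypothesis Hgen : generic q d.

Lemma Kpole_first : congr (x + s%:Z) kk ->
  w' = w * q1 ^ (x - c) * q2 ^ 0 -> Kpole q d kk w s x Y.
Proof.
move=> c1 e; rewrite /Kpole /Kden /Knum c1 plainE psi_den_eq0E psi_num_eq0E sub0r e eqxx /=.
have wq : w * q1 ^ (x - c) != 0.
  by rewrite mulf_neq0 ?expfz_neq0 ?q1_neq0 //; apply: contraNneq Hw' => w0; rewrite e w0 !mul0r.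
apply/eqP => /(mulfI wq) e2.
have : q1 ^ 0 * q2 ^ 0 = q1 ^ 0 * q2 ^ (-1) by rewrite e2.
by move/q1q2_expz_inj => [].
Qed.

End SingleFactor.

Lemma eq_power_sums2 (F : numFieldType) (X Y X' Y' : F) :
  X + Y = X' + Y' -> X ^+ 2 + Y ^+ 2 = X' ^+ 2 + Y' ^+ 2 -> X = X' \/ X = Y'.
Proof.
move=> e1 e2.
have : 2%:R * ((X - X') * (X - Y')) = 0.
  have -> : 2%:R * ((X - X') * (X - Y')) =
    X ^+ 2 + Y ^+ 2 - (X' ^+ 2 + Y' ^+ 2) - (X + Y - (X' + Y')) * (X' + Y' - X + Y) by ring.
  by rewrite e1 e2 !subrr mul0r subr0.
by move/eqP; rewrite !mulf_eq0 pnatr_eq0 !subr_eq0 => /orP [/eqP|] // /orP [] /eqP; tauto.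
Qed.

Section Tensor.
Variable R : realType.
Local Notation C := R[i].
Variables (n : nat) (q d : C).
Hypotheses (Hn : (1 < n)%N) (Hq : q != 0) (Hd : d != 0) (Hgen : generic q d).
Variables (k l : 'I_n) (u v : C).
Hypotheses (Hu : u != 0) (Hv : v != 0).
Local Notation q1 := (Defs.q1 q d).
Local Notation q2 := (Defs.q2 q).
Local Notation q3 := (Defs.q3 q d).
Local Notation congr := (Defs.congr n).

Lemma prod_Kcoef (i j : int) : \prod_(s : 'I_n) Kcoef q k l s i j = 1.
Proof. by rewrite /Kcoef big_split /= /Keig !(big_residue_branch Hn *%R) /= divff // mulr1. Qed.

Lemma level1_any (D : int * int -> bool) : level1 q d k l u v D.
Proof.
move=> x [_ xD]; rewrite /kappa_inv.
suff -> : forall r, foldr (fun s acc => actD q d k l u v D (GKinv s) acc) x r =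
    fun p => (\prod_(s <- r) (Kcoef q k l s p.1 p.2)^-1) * x p.
  by apply: functional_extensionality => p; rewrite big_enum /= prodfV prod_Kcoef invr1 mul1r.
elim=> [|s r IH]; apply: functional_extensionality => p; first by rewrite big_nil mul1r.
rewrite /= big_cons IH /actD /=; case: ifP => Dp; first by rewrite mulrA.
by rewrite xD ?Dp // mulr0.
Qed.

Definition hgain (m : int) : C := (1 - q ^ (- (2 * m))) / (m%:~R * (q - q^-1)).

Lemma hcoefE (m : int) (a : C) : hcoef q m a = hgain m * a ^ m.
Proof. by rewrite /hcoef /hgain mulrAC. Qed.

Lemma hgain_neq0 (m : int) : m != 0 -> hgain m != 0.
Proof.
move=> m0; rewrite /hgain mulf_neq0 ?invr_eq0 ?mulf_neq0 ?intr_eq0 ?(q_subV_neq0 Hq Hd Hgen) //.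
rewrite subr_eq0 eq_sym; apply: contra m0 => /eqP e.
have := @q_expz_inj R q d Hq Hd Hgen (- (2 * m)) 0; rewrite e expr0z => /(_ erefl) h.
by apply/eqP; lia.
Qed.

Lemma sum_Heig (kk : 'I_n) (w : C) (x m : int) :
  \sum_(s : 'I_n) Heig q d kk w s x m = hgain m * (1 - q3^-1 ^ m) * (q1 ^ x * w) ^ m.
Proof.
rewrite /Heig (big_residue_branch Hn +%R) /= !hcoefE.
by rewrite (mulrAC _ q3^-1) (mulrC _ q3^-1) (expfzMl q3^-1); ring.
Qed.

Lemma sum_Hcoef (m i j : int) :
  \sum_(s : 'I_n) Hcoef q d k l u v s m i j
  = hgain m * (1 - q3^-1 ^ m) * ((q1 ^ i * u) ^ m + (q1 ^ j * v) ^ m).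
Proof. by rewrite mulrDr -(sum_Heig k u) -(sum_Heig l v) -big_split; apply: eq_bigr. Qed.

Definition resonance (a b : int) : Prop :=
  congr a (k%:Z - l%:Z) /\ v = u * q1 ^ a * q2 ^ b.

(* The moves (i, j) -> (i, j + 1) of E and (i, j) -> (i - 1, j) of F have vanishing
   coefficient exactly when [blocked i j]. *)
Definition blocked (i j : int) : Prop := resonance (i - j) 1 \/ resonance (i - j - 1) (-1).

Definition unblocked (D : int * int -> bool) : Prop :=
  forall i j, D (i, j) -> D (i, j + 1) || D (i - 1, j) -> ~ blocked i j.

Lemma resonance_inj (a b a' b' : int) : resonance a b -> resonance a' b' -> a = a' /\ b = b'.
Proof.
move=> [_ e] [_]; rewrite e -!mulrA => /(mulfI Hu).
exact: q1q2_expz_inj.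
Qed.

(* Mixed coefficients: E_s on the second factor carries the K^-(z)-eigenvalue of
   the first factor at z = q1^(j+1) v, F_s on the first factor the K^+(z)-eigenvalue
   of the second factor at z = q1^i u. *)
Lemma Emix_den_eq0 (s : 'I_n) (i j : int) : congr (s%:Z + j + 1) l ->
  Kden q d k u s i (q1 ^ (j + 1) * v) = 0 -> exists a, resonance a 0.
Proof.
move=> cs /(Kden_eq0 Hq Hd Hv) [] [c1 e]; eexists; split; try exact: e;
  by apply: (congr_subE c1 cs); ring.
Qed.

Lemma Fmix_den_eq0 (s : 'I_n) (i j : int) : congr (s%:Z + i) k ->
  Kden q d l v s j (q1 ^ i * u) = 0 -> exists a, resonance a 0.
Proof.
move=> cs /(Kden_eq0 Hq Hd Hu) [] [c1 /monomial_eqV e]; eexists; split;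
  try (rewrite (e Hq Hd) oppr0; reflexivity); by apply: (congr_subE cs c1); ring.
Qed.

Lemma Emix_num_eq0 (s : 'I_n) (i j : int) : congr (s%:Z + j + 1) l ->
  Knum q d k u s i (q1 ^ (j + 1) * v) = 0 -> blocked i j.
Proof.
move=> cs /(Knum_eq0 Hq Hd Hv) [] [c1 e]; [right | left]; (split;
  [by apply: (congr_subE c1 cs); ring | by rewrite e; congr (_ * _ ^ _ * _); ring]).
Qed.

Lemma Fmix_num_eq0 (s : 'I_n) (i j : int) : congr (s%:Z + i) k ->
  Knum q d l v s j (q1 ^ i * u) = 0 -> blocked i j.
Proof.
move=> cs /(Knum_eq0 Hq Hd Hu) [] [c1 /monomial_eqV e]; [left | right]; (split;
  [by apply: (congr_subE cs c1); ring | by rewrite e //; congr (_ * _ ^ _ * _ ^ _); ring]).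
Qed.

Lemma Emix_num_blocked (s : 'I_n) (i j : int) : congr (s%:Z + j + 1) l ->
  blocked i j -> Knum q d k u s i (q1 ^ (j + 1) * v) = 0.
Proof.
move=> cs [] [c e].
- apply: Knum_eq0_second => //; first by apply: (congr_addE c cs); ring.
  by rewrite e; congr (_ * _ ^ _ * _); ring.
- apply: Knum_eq0_first => //; first by apply: (congr_addE c cs); ring.
  by rewrite e; congr (_ * _ ^ _ * _); ring.
Qed.

Lemma Fmix_num_blocked (s : 'I_n) (i j : int) : congr (s%:Z + i) k ->
  blocked i j -> Knum q d l v s j (q1 ^ i * u) = 0.
Proof.
move=> cs [] [c /monomial_eqV e].
- apply: Knum_eq0_first => //; first by apply: (congr_subE cs c); ring.
  by rewrite e //; congr (_ * _ ^ _ * _ ^ _); ring.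
- apply: Knum_eq0_second => //; first by apply: (congr_subE cs c); ring.
  by rewrite e //; congr (_ * _ ^ _ * _ ^ _); ring.
Qed.

Lemma Emix_neq0 (s : 'I_n) (i j : int) :
  ~ (exists a, resonance a 0) -> ~ blocked i j -> congr (s%:Z + j + 1) l ->
  Kval q d k u s i (q1 ^ (j + 1) * v) != 0.
Proof.
move=> nres nbl cs; rewrite /Kval mulf_neq0 ?invr_eq0 //; apply/eqP.
- by move/(Emix_num_eq0 cs).
- by move/(Emix_den_eq0 cs).
Qed.

Lemma Fmix_neq0 (s : 'I_n) (i j : int) :
  ~ (exists a, resonance a 0) -> ~ blocked i j -> congr (s%:Z + i) k ->
  Kval q d l v s j (q1 ^ i * u) != 0.
Proof.
move=> nres nbl cs; rewrite /Kval mulf_neq0 ?invr_eq0 //; apply/eqP.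
- by move/(Fmix_num_eq0 cs).
- by move/(Fmix_den_eq0 cs).
Qed.

Lemma well_definedP : well_defined q d k l u v <-> ~ exists a, resonance a 0.
Proof.
split => [wd [a [ca e]] | nres s i j].
  have [s cs'] := exists_residue Hn (0 + 1) l; rewrite addrA in cs'.
  have [/(_ cs') /negP + _] := wd s (a + 1) 0; apply.
  apply: Kpole_first => //; first by apply: (congr_addE ca cs'); ring.
  by rewrite e; congr (_ * _ ^ _ * _); ring.
split => cs; apply/negP => /andP [/eqP + _].
- by move/(Emix_den_eq0 cs).
- by move/(Fmix_den_eq0 cs).
Qed.

Definition Keig_exponent (kk s : 'I_n) (x : int) : int :=
  if congr (x + s%:Z) kk then 1 else if congr (x + s%:Z + 1) kk then -1 else 0.

Lemma KeigE (kk s : 'I_n) (x : int) : Keig q kk s x = q ^ Keig_exponent kk s x.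
Proof.
rewrite /Keig /Keig_exponent; case: ifP => _; first by rewrite expr1z.
by case: ifP => _; rewrite ?expr0z // -invr_expz expr1z.
Qed.

Lemma Heig1E (kk s : 'I_n) (w : C) (x : int) : Heig q d kk w s x 1 =
  hgain 1 * (if congr (x + s%:Z) kk then q1 ^ x * w
             else if congr (x + s%:Z + 1) kk then - (q3^-1 * (q1 ^ x * w)) else 0).
Proof.
rewrite /Heig !hcoefE !expr1z; case: ifP => _ //; case: ifP => _; last by rewrite mulr0.
by rewrite mulrN (mulrAC _ q3^-1) (mulrC _ q3^-1).
Qed.

Lemma swapped_weights_congr (i j i' j' : int) (s : 'I_n) :
  q1 ^ i' * u = q1 ^ j * v -> q1 ^ j' * v = q1 ^ i * u -> i != i' ->
  congr (i + s%:Z) k -> Kcoef q k l s i j = Kcoef q k l s i' j' ->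
  Hcoef q d k l u v s 1 i j = Hcoef q d k l u v s 1 i' j' -> congr (j' + s%:Z) l.
Proof.
move=> eY eX ne cs hK hH; apply: contraT => nc.
move: hK; rewrite /Kcoef !KeigE -!expfzDr // => /(q_expz_inj Hq Hd Hgen).
move: hH; rewrite /Hcoef !Heig1E -!mulrDr => /(mulfI (@hgain_neq0 1 isT)).
rewrite /Keig_exponent cs (negbTE nc) eX eY.
have XY : q1 ^ i * u != q1 ^ j * v.
  by apply: contra ne => /eqP e; apply/eqP/(q1_expz_inj Hq Hd Hgen Hu); rewrite eY.
have XqY : q1 ^ i * u != q3^-1 * (q1 ^ j * v).
  rewrite -eY; apply/eqP => e; have : q1 ^ i * q2 ^ 0 = q1 ^ (i' + 1) * q2 ^ 1.
    by apply: (mulIf Hu); rewrite expr0z mulr1 e q3V // expfzDr ?q1_neq0 // !expr1z; ring.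
  by case/(q1q2_expz_inj Hq Hd Hgen).
have q3VX : 1 + q3^-1 != 0 by rewrite addrC addr_eq0 (q3V_neqN1 Hq Hd Hgen).
set X := q1 ^ i * u in XY XqY *; set Y := q1 ^ j * v in XY XqY *.
case: (congr (j + s%:Z) l); case: (congr (j + s%:Z + 1) l);
case: (congr (i' + s%:Z) k); case: (congr (i' + s%:Z + 1) k);
case: (congr (j' + s%:Z + 1) l) => /= hH hK; try (exfalso; clear -hK; lia);
  rewrite ?addr0 ?add0r in hH.
all: first
  [ by move: XY; rewrite hH eqxx
  | by move: XqY; rewrite -subr_eq0 hH eqxx
  | have : (1 + q3^-1) * (X - Y) = X - q3^-1 * Y - (Y - q3^-1 * X) by ring ].
all: by rewrite hH subrr => /eqP; rewrite mulf_eq0 (negbTE q3VX) subr_eq0 (negbTE XY).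
Qed.

Lemma weight_separation (i j i' j' : int) :
  ~ (exists a, resonance a 0) ->
  (forall s, Kcoef q k l s i j = Kcoef q k l s i' j') ->
  (forall s (m : int), m != 0 -> Hcoef q d k l u v s m i j = Hcoef q d k l u v s m i' j') ->
  (i, j) = (i', j').
Proof.
move=> nres hK hH.
have power_sum (m : int) : m != 0 ->
    (q1 ^ i * u) ^ m + (q1 ^ j * v) ^ m = (q1 ^ i' * u) ^ m + (q1 ^ j' * v) ^ m.
  move=> m0; have : hgain m * (1 - q3^-1 ^ m) * ((q1 ^ i * u) ^ m + (q1 ^ j * v) ^ m)
                 = hgain m * (1 - q3^-1 ^ m) * ((q1 ^ i' * u) ^ m + (q1 ^ j' * v) ^ m).
    by rewrite -!sum_Hcoef; apply: eq_bigr => s _; exact: hH.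
  apply: mulfI; rewrite mulf_neq0 ?hgain_neq0 // subr_eq0 eq_sym.
  exact: q3V_expz_neq1.
have ps1 := power_sum 1 isT; rewrite !expr1z in ps1.
have ps2 := power_sum 2 isT; rewrite -!exprnP in ps2.
have inj1 := q1_expz_inj Hq Hd Hgen Hu; have inj2 := q1_expz_inj Hq Hd Hgen Hv.
case: (eqVneq i i') => [ei|ne]; first by move: ps1; rewrite ei => /addrI /inj2 ->.
have [/inj1 /eqP|eY] := eq_power_sums2 ps1 ps2; first by rewrite (negbTE ne).
have eY' : q1 ^ i' * u = q1 ^ j * v by move: ps1; rewrite eY addrC => /addIr.
have [s cs'] := exists_residue Hn i k; rewrite addrC in cs'.
have cj := swapped_weights_congr eY' (esym eY) ne cs' (hK s) (hH s 1 isT).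
case: nres; exists (i - j'); split; first by apply: (congr_subE cs' cj); ring.
have := @monomial_eqE R q d Hq Hd i 0 j' 0 u v.
by rewrite subrr !expr0z !mulr1 eY eqxx => /esym /eqP ->.
Qed.

Lemma region_submodule (c : int) :
  (forall j, blocked (j + c) j) -> is_submodule q d k l u v (region c).
Proof.
move=> bl g _ x [[sq hsq] xD]; split.
  exists ([seq (a.1 + 1, a.2) | a <- sq] ++ [seq (a.1, a.2 + 1) | a <- sq] ++
          [seq (a.1 - 1, a.2) | a <- sq] ++ [seq (a.1, a.2 - 1) | a <- sq] ++ sq).
  move=> [i j]; rewrite !mem_cat !negb_or => /and5P [h1 h2 h3 h4 h5].
  have xE1 : x (i - 1, j) = 0.
    by apply: hsq; apply: contra h1 => h; apply/mapP; exists (i - 1, j); rewrite //= subrK.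
  have xE2 : x (i, j - 1) = 0.
    by apply: hsq; apply: contra h2 => h; apply/mapP; exists (i, j - 1); rewrite //= subrK.
  have xF1 : x (i + 1, j) = 0.
    by apply: hsq; apply: contra h3 => h; apply/mapP; exists (i + 1, j); rewrite //= addrK.
  have xF2 : x (i, j + 1) = 0.
    by apply: hsq; apply: contra h4 => h; apply/mapP; exists (i, j + 1); rewrite //= addrK.
  by case: g => [s m|s m|s m|s|s] /=; rewrite ?xE1 ?xE2 ?xF1 ?xF2 ?hsq ?mulr0 ?addr0.
move=> [i j]; rewrite /region /= => out.
case: g => [s m|s m|s m|s|s] /=; last 3 first.
- by rewrite xD ?mulr0.
- by rewrite xD ?mulr0.
- by rewrite xD ?mulr0.
- rewrite (xD (i - 1, j)) ?mulr0 ?add0r /region /=; last by lia.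
  case: (boolP (j - 1 + c <= i)) => r; last by rewrite xD ?mulr0.
  rewrite /Ecoef2; case: ifP => cs; last by rewrite mul0r.
  have blij : blocked i (j - 1) by have := bl (j - 1); rewrite (_ : j - 1 + c = i) //; lia.
  by rewrite /Kval (Emix_num_blocked cs blij) !mul0r.
- rewrite (xD (i, j + 1)) ?mulr0 ?addr0 /region /=; last by lia.
  case: (boolP (j + c <= i + 1)) => r; last by rewrite xD ?mulr0.
  rewrite /Fcoef1; case: ifP => cs; last by rewrite mul0r.
  have blij : blocked (i + 1) j by have := bl j; rewrite (_ : j + c = i + 1) //; lia.
  by rewrite /Kval (Fmix_num_blocked cs blij) !mul0r.
Qed.

Definition basisv (p : int * int) : vec R := fun p' => if p' == p then 1 else 0.

Definition cartan_eig (g : gen n) (p : int * int) : C :=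
  match g with
  | GH s m => Hcoef q d k l u v s m p.1 p.2
  | GK s => Kcoef q k l s p.1 p.2
  | GKinv s => (Kcoef q k l s p.1 p.2)^-1
  | _ => 0
  end.

Lemma basisv_id (p : int * int) : basisv p p = 1.
Proof. by rewrite /basisv eqxx. Qed.

Lemma basisv_out (p z : int * int) : z != p -> basisv p z = 0.
Proof. by rewrite /basisv => /negbTE ->. Qed.

Lemma support_neq0 (x : vec R) : x <> zerov R -> exists p, x p != 0.
Proof.
move=> nz; apply: NNPP => nex; apply: nz; apply: functional_extensionality => p.
by apply/eqP; apply: contraT => ne; case: nex; exists p.
Qed.

Lemma act_GE_basisv_right (s : 'I_n) (m i j : int) :
  act q d k l u v (GE s m) (basisv (i, j)) (i + 1, j) = Ecoef1 q d k u s m i j.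
Proof. by rewrite /act /= addrK basisv_id basisv_out ?mulr0 ?addr0 ?mulr1 // xpair_eqE; lia. Qed.

Lemma act_GE_basisv_up (s : 'I_n) (m i j : int) :
  act q d k l u v (GE s m) (basisv (i, j)) (i, j + 1) = Ecoef2 q d k l u v s m i j.
Proof. by rewrite /act /= addrK basisv_id basisv_out ?mulr0 ?add0r ?mulr1 // xpair_eqE; lia. Qed.

Lemma act_GF_basisv_left (s : 'I_n) (m i j : int) :
  act q d k l u v (GF s m) (basisv (i, j)) (i - 1, j) = Fcoef1 q d k l u v s m i j.
Proof. by rewrite /act /= subrK basisv_id basisv_out ?mulr0 ?addr0 ?mulr1 // xpair_eqE; lia. Qed.

Lemma act_GF_basisv_down (s : 'I_n) (m i j : int) :
  act q d k l u v (GF s m) (basisv (i, j)) (i, j - 1) = Fcoef2 q d l v s m i j.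
Proof. by rewrite /act /= subrK basisv_id basisv_out ?mulr0 ?add0r ?mulr1 // xpair_eqE; lia. Qed.

Lemma inM_basisv (D : int * int -> bool) (p : int * int) : D p -> inM D (basisv p).
Proof.
move=> Dp; split; first by exists [:: p] => z; rewrite inE => /basisv_out.
by move=> z; apply: contraNeq => /eqP; rewrite /basisv; case: eqP => [->|].
Qed.

Lemma actD_cartan (D : int * int -> bool) (g : gen n) (x : vec R) (p : int * int) :
  cartan_gen g -> inM D x -> actD q d k l u v D g x p = cartan_eig g p * x p.
Proof.
move=> cg [_ xD]; rewrite /actD; case: ifP => Dp; first by case: g cg.
by rewrite xD ?Dp // mulr0.
Qed.

Lemma sum_basisv (L : seq (int * int)) (f : int * int -> C) (z : int * int) :
  uniq L -> \sum_(p <- L) f p * basisv p z = if z \in L then f z else 0.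
Proof.
elim: L => [|p L IH] /=; first by rewrite big_nil.
move=> /andP [pL uL]; rewrite big_cons IH // in_cons /basisv.
case: (eqVneq z p) => [->|] /=; last by rewrite mulr0 add0r.
by rewrite (negbTE pL) mulr1 addr0.
Qed.

Lemma basis_expansion (D : int * int -> bool) (x : vec R) : inM D x ->
  exists2 L : seq (int * int), uniq L &
    (forall p, p \in L -> D p /\ x p != 0) /\ x = fun z => \sum_(p <- L) x p * basisv p z.
Proof.
move=> [[sq xsq] xD]; exists [seq p <- undup sq | x p != 0].
  by rewrite filter_uniq ?undup_uniq.
split=> [p|].
  rewrite mem_filter => /andP [xp _]; split => //.
  by apply: contraNT xp => /xD ->.
apply: functional_extensionality => z; rewrite sum_basisv ?filter_uniq ?undup_uniq //.
rewrite mem_filter mem_undup; case: (eqVneq (x z) 0) => //= xz.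
by case: ifP => // /negbT /xsq.
Qed.

Section Separated.
Hypothesis nres : ~ exists a, resonance a 0.

Lemma cartan_eig_inj (p p' : int * int) :
  (forall g, cartan_gen g -> cartan_eig g p = cartan_eig g p') -> p = p'.
Proof.
case: p p' => i j [i' j'] h; apply: weight_separation.
- exact: nres.
- by move=> s; exact: (h (GK s) isT).
- by move=> s m m0; exact: (h (GH s m) m0).
Qed.

Lemma exists_cartan_sep (p p' : int * int) :
  p != p' -> exists2 g, cartan_gen g & cartan_eig g p != cartan_eig g p'.
Proof.
move=> ne; apply: NNPP => nex; move/eqP: ne; apply; apply: cartan_eig_inj => g cg.
by apply/eqP; apply: contraT => ne; case: nex; exists g.
Qed.

Section Stable.
Variables (D : int * int -> bool) (S : vec R -> Prop).
Hypotheses (S_subspace : subspace S) (S_in : forall x, S x -> inM D x).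
Hypothesis S_stable : forall g, valid_gen g -> forall x, S x -> S (actD q d k l u v D g x).

Lemma stable_drop_weight (x : vec R) (p p' : int * int) : S x -> p' != p ->
  exists2 y, S y & [/\ y p' = 0, (y p == 0) = (x p == 0) & forall z, x z = 0 -> y z = 0].
Proof.
move=> Sx ne; have [g cg hg] := exists_cartan_sep ne.
have [_ [S_add S_scale]] := S_subspace.
exists (fun z => actD q d k l u v D g x z + (- cartan_eig g p') * x z).
  by apply: S_add; [apply: S_stable; case: g cg {hg} | exact: S_scale].
have yE z : actD q d k l u v D g x z + - cartan_eig g p' * x z =
            (cartan_eig g z - cartan_eig g p') * x z.
  by rewrite (actD_cartan _ cg (S_in Sx)); ring.
split=> [|| z xz]; rewrite yE ?subrr ?mul0r ?xz ?mulr0 //.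
by rewrite mulf_eq0 subr_eq0 eq_sym (negbTE hg).
Qed.

Lemma stable_basisv (x : vec R) (p : int * int) : S x -> x p != 0 -> S (basisv p).
Proof.
move=> Sx xp; have [[L xL] _] := S_in Sx.
have {}xL z : z != p -> z \notin L -> x z = 0 by move=> _; exact: xL.
elim: L x Sx xp xL => [|a L IH] x Sx xp xL.
  have [_ [_ S_scale]] := S_subspace.
  have -> : basisv p = fun z => (x p)^-1 * x z.
    apply: functional_extensionality => z; rewrite /basisv.
    by case: ifP => [/eqP ->|/negbT zp]; [rewrite mulVf | rewrite (xL z zp) ?mulr0].
  exact: S_scale _ _ Sx.
have xL' z : z != p -> z != a -> z \notin L -> x z = 0.
  by move=> zp za zL; apply: xL; rewrite // in_cons negb_or za.
case: (eqVneq a p) => [ap|ne].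
  by apply: (IH x) => // z zp; apply: xL'; rewrite // ap.
have [y Sy [ya yp yx]] := stable_drop_weight Sx ne.
apply: (IH y) => //; first by rewrite yp.
by move=> z zp zL; case: (eqVneq z a) => [->//|za]; apply/yx/xL'.
Qed.

Lemma stable_basisv_act (g : gen n) (p t : int * int) : valid_gen g -> D t ->
  act q d k l u v g (basisv p) t != 0 -> S (basisv p) -> S (basisv t).
Proof.
move=> vg Dt ne Sp; apply: (@stable_basisv (actD q d k l u v D g (basisv p))).
  exact: S_stable.
by rewrite /actD Dt.
Qed.

Hypothesis D_unblocked : unblocked D.

Lemma stable_basisv_adjacent (p p' : int * int) :
  D p -> D p' -> adjacent p p' -> S (basisv p) -> S (basisv p').
Proof.
case: p => i j D1 D2 [] e; rewrite e /= in D2 *.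
- have [s cs] := exists_residue Hn (i + 1) k; rewrite addrA in cs.
  apply: (@stable_basisv_act (GE s 0) _ _ isT D2).
  by rewrite act_GE_basisv_right /Ecoef1 cs expr0z oner_neq0.
- have [s cs] := exists_residue Hn i k.
  apply: (@stable_basisv_act (GF s 0) _ _ isT D2).
  rewrite act_GF_basisv_left /Fcoef1 cs expr0z mulr1 Fmix_neq0 //.
  by apply: D_unblocked; rewrite ?D2 ?orbT.
- have [s cs] := exists_residue Hn (j + 1) l; rewrite addrA in cs.
  apply: (@stable_basisv_act (GE s 0) _ _ isT D2).
  rewrite act_GE_basisv_up /Ecoef2 cs expr0z mulr1 Emix_neq0 //.
  by apply: D_unblocked; rewrite ?D2.
- have [s cs] := exists_residue Hn j l.
  apply: (@stable_basisv_act (GF s 0) _ _ isT D2).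
  by rewrite act_GF_basisv_down /Fcoef2 cs expr0z oner_neq0.
Qed.

End Stable.

Lemma irreducible_of_connected (D : int * int -> bool) (p0 : int * int) :
  D p0 -> step_connected D -> unblocked D -> irreducible q d k l u v D.
Proof.
move=> D0 Dconn Dunbl; split.
  exists (basisv p0); split; first exact: inM_basisv.
  by move/(congr1 (fun f => f p0)); rewrite basisv_id => /eqP; rewrite oner_eq0.
move=> S Ssub Sin Sstab [x0 [Sx0 nz]] x /basis_expansion [L _ [LD ->]].
have [p x0p] := support_neq0 nz.
have Dp : D p by have [_ x0D] := Sin _ Sx0; apply: contraNT x0p => /x0D ->.
have allS z : D z -> S (basisv z).
  move=> Dz; apply: (@step_connected_ind D (fun z => S (basisv z)) Dconn _ p z Dp Dz).
    by move=> p1 p2; apply: stable_basisv_adjacent.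
  exact: (stable_basisv Ssub Sin Sstab Sx0 x0p).
have [S0 [Sadd Sscale]] := Ssub.
elim: L LD => [|a L IH] LD.
  rewrite (_ : (fun _ => _) = zerov R) //.
  by apply: functional_extensionality => z; rewrite big_nil.
rewrite (_ : (fun _ => _) = fun z => x a * basisv a z + \sum_(p <- L) x p * basisv p z).
  apply: Sadd; first by apply: Sscale; apply: allS; have [] := LD a (mem_head _ _).
  by apply: IH => b bL; apply: LD; rewrite in_cons bL orbT.
by apply: functional_extensionality => z; rewrite big_cons.
Qed.

Lemma tame_any (D : int * int -> bool) : tame q d k l u v D.
Proof.
split=> [x /basis_expansion [L uL [LD xE]] | lam x y xj yj].
  exists (size L), (fun t z => x (nth (0, 0) L t) * basisv (nth (0, 0) L t) z),
         (fun t g => cartan_eig g (nth (0, 0) L t)); split.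
    move=> t tL; set p := nth (0, 0) L t; have [Dp xp] := LD p (mem_nth _ tL).
    have inMp : inM D (fun z => x p * basisv p z).
      have [[sq hsq] hD] := inM_basisv Dp.
      by split; [exists sq => z /hsq -> | move=> z /hD ->]; rewrite mulr0.
    split=> //; split=> [/(congr1 (fun f => f p))|g cg].
      by rewrite basisv_id mulr1 => /eqP; rewrite (negbTE xp).
    apply: functional_extensionality => z; rewrite actD_cartan //.
    by case: (eqVneq z p) => [->//|zp]; rewrite (basisv_out zp) !mulr0.
  by rewrite {1}xE; apply: functional_extensionality => z; rewrite (big_nth (0, 0)) big_mkord.
have [p xp] := support_neq0 xj.2.1.
have eig_at (w : vec R) z : joint_eig q d k l u v D lam w -> w z != 0 ->
    forall g, cartan_gen g -> cartan_eig g z = lam g.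
  move=> [wD [_ weig]] wz g cg; apply: (mulIf wz).
  by rewrite -(actD_cartan _ cg wD) weig.
have z_is_p (w : vec R) z : joint_eig q d k l u v D lam w -> w z != 0 -> z = p.
  move=> wj wz; apply: cartan_eig_inj => g cg.
  by rewrite (eig_at w z wj wz g cg) (eig_at x p xj xp g cg).
exists (y p / x p); apply: functional_extensionality => z.
case: (eqVneq z p) => [->|zp]; first by rewrite divfK.
have w0 (w : vec R) : joint_eig q d k l u v D lam w -> w z = 0.
  by move=> wj; apply/eqP; move: zp; apply: contraNT => /(z_is_p w z wj) ->.
by rewrite (w0 x xj) (w0 y yj) mulr0.
Qed.

Lemma tame_irr_level1_of_connected (D : int * int -> bool) (p0 : int * int) :
  D p0 -> step_connected D -> unblocked D -> tame_irr_level1 q d k l u v D.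
Proof.
move=> D0 Dconn Dunbl; split; first exact: tame_any.
by split; [exact: (irreducible_of_connected D0) | exact: level1_any].
Qed.

Lemma tame_irr_level1_diagonal (c : int) : (forall i j, blocked i j -> i - j = c) ->
  tame_irr_level1 q d k l u v (region c) /\ tame_irr_level1 q d k l u v (coregion c).
Proof.
rewrite /coregion /region => diag; split.
- apply: (@tame_irr_level1_of_connected _ (c, 0)); rewrite /= ?add0r //.
    exact: region_step_connected.
  by move=> i j /= D1 D2 /diag e; move: D2 e; lia.
- apply: (@tame_irr_level1_of_connected _ (c - 1, 0)); rewrite /= ?add0r; first by lia.
    exact: coregion_step_connected.
  by move=> i j /= D1 D2 /diag e; move: D1 e; lia.
Qed.

Lemma tame_irr_level1_full : (forall i j, ~ blocked i j) -> tame_irr_level1 q d k l u v fullregion.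
Proof.
move=> unbl; apply: (@tame_irr_level1_of_connected _ (0, 0)) => //.
exact: fullregion_step_connected.
Qed.

End Separated.

Local Notation N m := (n%:Z * m + k%:Z - l%:Z).

Lemma resonance_reprP (m b : int) : resonance (N m) b <-> u * q2 ^ b * q1 ^ N m = v.
Proof.
split=> [[_ ->]|e]; first by rewrite mulrAC.
split; last by rewrite -e mulrAC.
by rewrite /Defs.congr (_ : _ - _ = n%:Z * m); [exact: dvdz_mulr | ring].
Qed.

Lemma resonance_repr (a b : int) : resonance a b -> exists m, resonance (N m) b.
Proof.
move=> ra; have [/dvdzP [m em] _] := ra; exists m.
by rewrite (_ : N m = a) // -[a](subrK (k%:Z - l%:Z)) em; ring.
Qed.

Lemma resonance_up_split (a : int) : resonance a 1 ->
  is_submodule q d k l u v (region a) /\ tame_irr_level1 q d k l u v (region a) /\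
  tame_irr_level1 q d k l u v (coregion a).
Proof.
move=> ra.
have nres : ~ exists a', resonance a' 0 by case=> a' /(resonance_inj ra) [].
have diag i j : blocked i j -> i - j = a by case=> /(resonance_inj ra) [] // ->.
have [reg coreg] := tame_irr_level1_diagonal nres diag.
split=> //; apply: region_submodule => j; left.
by rewrite (_ : j + a - j = a) //; ring.
Qed.

Lemma resonance_down_split (a : int) : resonance a (-1) ->
  is_submodule q d k l u v (region (a + 1)) /\ tame_irr_level1 q d k l u v (region (a + 1)) /\
  tame_irr_level1 q d k l u v (coregion (a + 1)).
Proof.
move=> ra.
have nres : ~ exists a', resonance a' 0 by case=> a' /(resonance_inj ra) [].
have diag i j : blocked i j -> i - j = a + 1.
  by case=> /(resonance_inj ra) [-> //] _; ring.
have [reg coreg] := tame_irr_level1_diagonal nres diag.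
split=> //; apply: region_submodule => j; right.
by rewrite (_ : j + (a + 1) - j - 1 = a) //; ring.
Qed.

Lemma nonresonant_tame_irr_level1 :
  (~ exists a, resonance a 0) -> (~ exists a, resonance a 1) -> (~ exists a, resonance a (-1)) ->
  tame_irr_level1 q d k l u v fullregion.
Proof.
move=> n0 n1 n_1; apply: tame_irr_level1_full => // i j [] r.
- by apply: n1; exists (i - j).
- by apply: n_1; exists (i - j - 1).
Qed.

End Tensor.

Theorem mainTheorem3 (R : realType) (n : nat) (q d : R[i])
  (Hn : (3 <= n)%N) (Hq : q != 0) (Hd : d != 0) (Hgen : generic q d)
  (k l : 'I_n) (u v : R[i]) (Hu : u != 0) (Hv : v != 0) :
  let N (m : int) : int := n%:Z * m + k%:Z - l%:Z in
  (* 1 *)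
  ((~ well_defined q d k l u v) <-> exists m : int, u * q1 q d ^ N m = v) /\
  (* 2 *)
  (forall m : int, u * q2 q * q1 q d ^ N m = v ->
     is_submodule q d k l u v (region (N m)) /\
     tame_irr_level1 q d k l u v (region (N m)) /\
     tame_irr_level1 q d k l u v (coregion (N m))) /\
  (* 3 *)
  (forall m : int, u * (q2 q)^-1 * q1 q d ^ N m = v ->
     is_submodule q d k l u v (region (N m + 1)) /\
     tame_irr_level1 q d k l u v (region (N m + 1)) /\
     tame_irr_level1 q d k l u v (coregion (N m + 1))) /\
  (* 4 *)
  ((~ exists m : int, u * q1 q d ^ N m = v) ->
   (~ exists m : int, u * q2 q * q1 q d ^ N m = v) ->
   (~ exists m : int, u * (q2 q)^-1 * q1 q d ^ N m = v) ->
   tame_irr_level1 q d k l u v (fullregion)).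
Proof.
move=> N; have Hn1 : (1 < n)%N := ltnW Hn.
have reprP (m b : int) := resonance_reprP q d k l u v m b.
have no_res (b : int) :
    (~ exists m, u * q2 q ^ b * q1 q d ^ N m = v) -> ~ exists a, resonance q d k l u v a b.
  by move=> nex [a /resonance_repr [m /reprP e]]; apply: nex; exists m.
have wdP := well_definedP Hn1 Hq Hd Hgen k l Hu Hv.
split; [|split; [|split]].
- split=> [nwd | [m e] /wdP]; last by apply; exists (N m); apply/reprP; rewrite expr0z mulr1.
  apply: NNPP => nex; apply/nwd/wdP/(no_res 0) => -[m e].
  by apply: nex; exists m; rewrite -e expr0z mulr1.
- move=> m e; apply: (resonance_up_split Hn1 Hq Hd Hgen Hu Hv).
  by apply/reprP; rewrite expr1z.
- move=> m e; apply: (resonance_down_split Hn1 Hq Hd Hgen Hu Hv).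
  by apply/reprP; rewrite -invr_expz expr1z.
- move=> n0 n1 n_1; apply: (nonresonant_tame_irr_level1 Hn1 Hq Hd Hgen Hu Hv); apply: no_res.
  + by rewrite expr0z mulr1.
  + by rewrite expr1z.
  + by rewrite -invr_expz expr1z.
Qed.
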